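(* Fix $k\in\mathbb{N}$ and let $Q$ be a class of $k$-degenerate graphs (closed under isomorphism). Then $P_Q$ is weakly distinguishing.
   Context: All graphs are finite and simple. A graph is $k$-degenerate if every induced subgraph has a vertex of degree at most $k$. For a class $Q$, $P_Q(G;X)=\sum_{A\subseteq V(G):\, G[A]\in Q}X^{|A|}$, where $G[A]$ is the induced subgraph on $A$. A graph $G$ is $P$-unique if every graph $H$ with $P(G)=P(H)$ is isomorphic to $G$. With $\mathcal{G}(n)$ the set of isomorphism classes of graphs on $n$ vertices and $U_P(n)$ the $P$-unique graphs in $\mathcal{G}(n)$, $P$ is weakly distinguishing if $\lim_{n\to\infty}|U_P(n)|/|\mathcal{G}(n)|=0$. *)

From mathcomp Require Import all_boot all_order all_algebra.
From mathcomp Require Import fingroup perm boolp.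
Set Implicit Arguments. Unset Strict Implicit. Unset Printing Implicit Defensive.
Import GRing.Theory Num.Theory.

Definition is_graph (T : finType) (e : rel T) : Prop :=
  symmetric e /\ irreflexive e.

Definition graph_iso (T1 T2 : finType) (e1 : rel T1) (e2 : rel T2) : Prop :=
  exists f : T1 -> T2, bijective f /\ forall x y, e2 (f x) (f y) = e1 x y.

Definition graph_class := forall T : finType, rel T -> bool.

Definition iso_closed (Q : graph_class) : Prop :=
  forall (T1 T2 : finType) (e1 : rel T1) (e2 : rel T2),
    is_graph e1 -> is_graph e2 -> graph_iso e1 e2 -> Q T1 e1 = Q T2 e2.

Definition induced (T : finType) (e : rel T) (A : {set T}) :
  rel {x : T | x \in A} := fun x y => e (val x) (val y).

Definition degenerate (k : nat) (T : finType) (e : rel T) : Prop :=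
  forall A : {set T}, A != set0 ->
    exists2 x, x \in A & #|[set y in A | e x y]| <= k.

Definition PQ (Q : graph_class) (T : finType) (e : rel T) : {poly int} :=
  (\sum_(A : {set T} | Q _ (@induced T e A)) 'X^#|A|)%R.

Definition PQ_unique (Q : graph_class) (T : finType) (e : rel T) : Prop :=
  forall (T' : finType) (e' : rel T'), is_graph e' ->
    PQ Q e' = PQ Q e -> graph_iso e' e.

Definition lgraph (n : nat) := {ffun 'I_n * 'I_n -> bool}.
Definition lrel (n : nat) (g : lgraph n) : rel 'I_n := fun x y => g (x, y).
Definition graphs (n : nat) : {set lgraph n} :=
  [set g : lgraph n | [forall x, forall y, g (x, y) == g (y, x)]
                      && [forall x, ~~ g (x, x)]].
Definition liso (n : nat) (g h : lgraph n) : bool :=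
  [exists p : {perm 'I_n}, [forall x, forall y, h (p x, p y) == g (x, y)]].

Definition iso_classes (n : nat) : {set {set lgraph n}} :=
  [set [set h in graphs n | liso g h] | g in graphs n].

Definition unique_classes (Q : graph_class) (n : nat) : {set {set lgraph n}} :=
  [set C in iso_classes n |
     `[< exists2 g, g \in C & PQ_unique Q (lrel g) >]].

Definition weakly_distinguishing (Q : graph_class) : Prop :=
  forall eps : rat, (0 < eps)%R -> exists N : nat, forall n, N <= n ->
    ((#|unique_classes Q n|%:R / #|iso_classes n|%:R) < eps)%R.

From mathcomp Require Import all_boot all_order all_algebra.
From mathcomp Require Import perm boolp zify lra.
Set Implicit Arguments. Unset Strict Implicit. Unset Printing Implicit Defensive.
Import Order.TTheory GRing.Theory Num.Theory.

(* Count labelled graphs on n vertices: there are at least 2^C(n,2) of them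
   and an isomorphism class has at most n! members.  Let s = n/(4(k+1)) and
   m = s(k+1).  A graph with an induced Q-subgraph on at least m vertices
   contains an independent set of size s, because that subgraph is
   k-degenerate, and at most a fraction 2^n 2^-C(s,2) of all graphs has one.
   Any other graph has P_Q determined by its first m coefficients, each at
   most 2^n, so P_Q takes at most (2^n+1)^m values on such graphs, and
   P_Q-uniqueness makes the class of such a graph a function of that value.
   Both bounds are at most 2^C(n,2)/(n n!) once n >= (128 (k+1)^2)^2, so at
   most 2/n of the classes are P_Q-unique. *)

Lemma card_sets (T : finType) : #|{: {set T}}| = 2 ^ #|T|.
Proof. by rewrite -cardsT -card_powerset powersetT cardsT. Qed.

Lemma leq_card_bigcup (I T : finType) (P : pred I) (F : I -> {set T}) :
  #|\bigcup_(i | P i) F i| <= \sum_(i | P i) #|F i|.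
Proof.
elim/big_rec2: _ => [|i U s _ IH]; first by rewrite cards0.
by rewrite cardsU (leq_trans (leq_subr _ _)) // leq_add2l.
Qed.

Lemma leq_card_imset_factor (A B C : finType) (D : {set A}) (f : A -> B) (h : A -> C) :
  {in D &, forall x y, f x = f y -> h x = h y} -> #|h @: D| <= #|f @: D|.
Proof.
move=> h_f; have [->|[x0 _]] := set_0Vmem D; first by rewrite !imset0 cards0.
pose h' z := h (odflt x0 [pick x in D | f x == z]).
suff sub : h @: D \subset h' @: (f @: D).
  exact: leq_trans (subset_leq_card sub) (leq_imset_card _ _).
apply/subsetP=> _ /imsetP[x xD ->]; apply/imsetP; exists (f x); first exact: imset_f.
rewrite /h'; case: pickP => [y /andP[yD /eqP fy]|/(_ x)]; last by rewrite xD eqxx.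
by rewrite /= (h_f x y xD yD).
Qed.

Lemma degenerate_independent_set (T : finType) (e : rel T) k :
  is_graph e -> degenerate k e -> forall A : {set T}, exists I : {set T},
  [/\ I \subset A, {in I &, forall x y, ~~ e x y} & #|A| <= #|I| * k.+1].
Proof.
(* Greedily keep a vertex x of degree <= k in A, and recurse on A minus x and
   its neighbours. *)
move=> [e_sym e_irr] e_deg A; have [c] := ubnP #|A|; elim: c A => // c IH A Ac.
have [->|A0] := eqVneq A set0.
  by exists set0; split; rewrite ?sub0set ?cards0 // => x y; rewrite inE.
have [x xA deg_x] := e_deg A A0.
set N := [set y in A | e x y] in deg_x.
set A' := A :\: (x |: N).
have A'A : A' \subset A by apply: subsetDl.
have xA' : x \notin A' by rewrite !inE eqxx.
have A'c : #|A'| < c.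
  rewrite -ltnS (leq_trans _ Ac) // ltnS.
  by apply: proper_card; apply/properP; split => //; exists x.
have [I [I_A' I_indep A'_I]] := IH A' A'c.
have x_I y : y \in I -> ~~ e x y.
  move=> /(subsetP I_A'); rewrite !inE negb_or => /andP[/andP[_ yN] yA].
  by move: yN; rewrite yA.
exists (x |: I); split.
- by rewrite subUset sub1set xA (subset_trans I_A' A'A).
- move=> u v; rewrite !inE => /orP[/eqP->|uI] /orP[/eqP->|vI].
  + by rewrite e_irr.
  + exact: x_I.
  + by rewrite e_sym x_I.
  + exact: I_indep.
- have xI : x \notin I by apply: contra xA'; apply: (subsetP I_A').
  rewrite cardsU1 xI mulSn -(cardsID (x |: N) A) -/A' leq_add //.
  apply: leq_trans (subset_leq_card (subsetIr _ _)) _.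
  by rewrite cardsU1 addnC -addn1 leq_add // leq_b1.
Qed.

Lemma induced_graph (T : finType) (e : rel T) (A : {set T}) :
  is_graph e -> is_graph (@induced _ e A).
Proof. by case=> e_sym e_irr; split=> [x y|x]; [apply: e_sym | apply: e_irr]. Qed.

Section InducedQSubgraphs.
Variables (Q : graph_class) (T : finType) (e : rel T).
Arguments Q : clear implicits.

Definition Q_sets (j : nat) := [set A : {set T} | Q _ (@induced _ e A) & #|A| == j].

Lemma coef_PQ j : ((PQ Q e)`_j = #|Q_sets j|%:R)%R.
Proof.
rewrite /PQ coef_sum; under eq_bigr do rewrite coefXn.
rewrite -natr_sum -sum1_card big_mkcond [in RHS]big_mkcond /=; congr (_%:R)%R.
by apply: eq_bigr => A _; rewrite inE eq_sym; case: (Q _ _); case: (_ == _).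
Qed.

Lemma card_Q_sets j : #|Q_sets j| <= 2 ^ #|T|.
Proof. by rewrite -card_sets max_card. Qed.

Definition has_large_Q (m : nat) :=
  [exists A : {set T}, (m <= #|A|) && Q _ (@induced _ e A)].

Lemma Q_sets_large m j : ~~ has_large_Q m -> m <= j -> Q_sets j = set0.
Proof.
move=> /existsPn no_large mj; apply/setP=> A; rewrite !inE.
by apply/andP=> -[QA /eqP cardA]; move/negP: (no_large A); rewrite cardA mj QA.
Qed.

End InducedQSubgraphs.

Section LabelledGraphs.
Variable n : nat.
Implicit Types (g h l : lgraph n) (B : {set 'I_n}).

Lemma graphsP g :
  reflect ((forall x y, g (x, y) = g (y, x)) /\ (forall x, g (x, x) = false))
          (g \in graphs n).
Proof.
rewrite inE; apply: (iffP andP) => [[/forallP g_sym /forallP g_irr]|[g_sym g_irr]].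
  by split=> [x y|x]; [apply/eqP; have /forallP := g_sym x; apply | apply/negbTE].
by split; apply/forallP=> x; [apply/forallP=> y; rewrite g_sym | rewrite g_irr].
Qed.

Lemma lrel_graph g : g \in graphs n -> is_graph (lrel g).
Proof. by case/graphsP=> g_sym g_irr; split=> [x y|x]; [apply: g_sym | apply: g_irr]. Qed.

Lemma liso_graph_iso g h : graph_iso (lrel g) (lrel h) -> liso g h.
Proof.
case=> f [f_bij f_iso]; apply/existsP; exists (perm (bij_inj f_bij)).
by apply/forallP=> x; apply/forallP=> y; rewrite !permE; apply/eqP/f_iso.
Qed.

Lemma liso_refl g : liso g g.
Proof.
by apply/existsP; exists 1%g; apply/forallP=> x; apply/forallP=> y; rewrite !perm1.
Qed.

Lemma liso_sym g h : liso g h -> liso h g.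
Proof.
case/existsP=> p /forallP gh; apply/existsP; exists p^-1%g.
apply/forallP=> x; apply/forallP=> y.
by have /forallP/(_ (p^-1%g y))/eqP <- := gh (p^-1%g x); rewrite !permKV.
Qed.

Lemma liso_trans g h l : liso g h -> liso h l -> liso g l.
Proof.
case/existsP=> p /forallP gh; case/existsP=> q /forallP hl.
apply/existsP; exists (p * q)%g; apply/forallP=> x; apply/forallP=> y.
by rewrite !permM; have /forallP/(_ (p y))/eqP -> := hl (p x); apply: (forallP (gh x)).
Qed.

Definition iso_class g := [set h in graphs n | liso g h].

Lemma iso_class_eq g h : liso g h -> iso_class g = iso_class h.
Proof.
move=> gh; apply/setP=> l; rewrite !inE; apply: andb_id2l => _.
by apply/idP/idP; [apply: liso_trans (liso_sym gh) | apply: liso_trans gh].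
Qed.

Lemma iso_classesP C g : C \in iso_classes n -> g \in C -> C = iso_class g.
Proof. by case/imsetP=> g0 _ -> /setIdP[_ /iso_class_eq]. Qed.

Lemma card_iso_class g : #|iso_class g| <= n`!.
Proof.
pose relabel (p : {perm 'I_n}) : lgraph n := [ffun xy => g (p^-1%g xy.1, p^-1%g xy.2)].
have : iso_class g \subset relabel @: [set: {perm 'I_n}].
  apply/subsetP=> h /setIdP[_ /existsP[p /forallP gh]].
  apply/imsetP; exists p; rewrite ?inE //; apply/ffunP=> -[x y]; rewrite ffunE /=.
  by have /forallP/(_ (p^-1%g y))/eqP <- := gh (p^-1%g x); rewrite !permKV.
move/subset_leq_card/leq_trans; apply.
by apply: leq_trans (leq_imset_card _ _) _; rewrite cardsT card_Sn.
Qed.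

Lemma card_graphs_le : #|graphs n| <= n`! * #|iso_classes n|.
Proof.
rewrite -sum1_card (partition_big iso_class (mem (iso_classes n))) => [|g gG]; last first.
  exact: imset_f.
rewrite mulnC -sum_nat_const leq_sum // => C /imsetP[g0 _ ->].
rewrite -/(iso_class g0) sum1_card (leq_trans _ (card_iso_class g0)) //.
by apply/subset_leq_card/subsetP=> g /andP[gG /eqP <-]; rewrite inE gG liso_refl.
Qed.

Definition indep_graphs B : {set lgraph n} :=
  [set g in graphs n | [forall x in B, forall y in B, ~~ g (x, y)]].

Definition pairs_in B := {A : {set 'I_n} | (A \subset B) && (#|A| == 2)}.

Lemma card_pairs_in B : #|{: pairs_in B}| = 'C(#|B|, 2).
Proof. by rewrite card_sig -cards_draws; apply: eq_card => A; rewrite inE. Qed.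

(* [insub] succeeds exactly when [x] and [y] are distinct vertices of [B]. *)
Definition fill_pairs B (g : lgraph n) (f : {ffun pairs_in B -> bool}) : lgraph n :=
  [ffun xy => if insub [set xy.1; xy.2] is Some A then f A else g xy].

Lemma fill_pairsE B g (f : {ffun pairs_in B -> bool}) x y : fill_pairs g f (x, y) =
  if insub [set x; y] is Some A then f A else g (x, y) :> bool.
Proof. by rewrite ffunE. Qed.

Lemma fill_pairs_graph B g (f : {ffun pairs_in B -> bool}) :
  g \in graphs n -> fill_pairs g f \in graphs n.
Proof.
case/graphsP=> g_sym g_irr; apply/graphsP; split=> [x y|x].
  by rewrite !fill_pairsE setUC; case: insubP => // _ _ _; rewrite g_sym.
rewrite fill_pairsE setUid; case: insubP => [A /andP[_] | _]; last exact: g_irr.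
by rewrite cards1.
Qed.

Lemma fill_pairs_inj B g1 g2 (f1 f2 : {ffun pairs_in B -> bool}) :
  g1 \in indep_graphs B -> g2 \in indep_graphs B ->
  fill_pairs g1 f1 = fill_pairs g2 f2 -> g1 = g2 /\ f1 = f2.
Proof.
move=> /setIdP[_ /forall_inP g1B] /setIdP[_ /forall_inP g2B] eq_fill.
have eq_at x y := congr1 (fun h : lgraph n => h (x, y)) eq_fill; split.
  apply/ffunP=> -[x y]; move: (eq_at x y); rewrite !fill_pairsE.
  case: insubP => [A /andP[xyB _] _ _ | _ //].
  have [xB yB] : x \in B /\ y \in B.
    by split; apply: (subsetP xyB); rewrite !inE eqxx ?orbT.
  by rewrite (negbTE (forall_inP (g1B x xB) y yB)) (negbTE (forall_inP (g2B x xB) y yB)).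
apply/ffunP=> A; have /andP[_ /cards2P[x [y [_ Axy]]]] := valP A.
move: (eq_at x y); rewrite !fill_pairsE; case: insubP => [A' _ A'xy|]; last first.
  by rewrite -Axy => /negP[]; exact: (valP A).
by have -> : A' = A by apply: val_inj; rewrite A'xy Axy.
Qed.

Lemma card_indep_graphs B : #|indep_graphs B| * 2 ^ 'C(#|B|, 2) <= #|graphs n|.
Proof.
pose fill (gf : lgraph n * {ffun pairs_in B -> bool}) := fill_pairs gf.1 gf.2.
have -> : #|indep_graphs B| * 2 ^ 'C(#|B|, 2) =
          #|fill @: setX (indep_graphs B) [set: {ffun pairs_in B -> bool}]|.
  rewrite card_in_imset; first by rewrite cardsX cardsT card_ffun card_bool card_pairs_in.
  move=> [g1 f1] [g2 f2] /setXP[g1B _] /setXP[g2B _] /fill_pairs_inj.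
  by case/(_ g1B g2B) => /= -> ->.
apply/subset_leq_card/subsetP=> _ /imsetP[[g f] /setXP[/setIdP[gG _] _] ->].
exact: fill_pairs_graph.
Qed.

Lemma card_graphs_ge : 2 ^ 'C(n, 2) <= #|graphs n|.
Proof.
apply: leq_trans (card_indep_graphs [set: 'I_n]); rewrite cardsT card_ord leq_pmull //.
rewrite card_gt0; apply/set0Pn; exists [ffun => false]; rewrite inE.
apply/andP; split; first by apply/graphsP; split=> *; rewrite !ffunE.
by apply/forall_inP=> x _; apply/forall_inP=> y _; rewrite ffunE.
Qed.

End LabelledGraphs.

Section CountingUniqueClasses.
Variables (Q : graph_class) (n m : nat).
Implicit Types g : lgraph n.

Definition large_Q_graphs : {set lgraph n} :=
  [set g in graphs n | has_large_Q Q (lrel g) m].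

Definition PQ_code g : {ffun 'I_m -> 'I_(2 ^ n).+1} :=
  [ffun j : 'I_m => inord #|Q_sets Q (lrel g) j|].

Lemma PQ_code_eq g1 g2 :
  ~~ has_large_Q Q (lrel g1) m -> ~~ has_large_Q Q (lrel g2) m ->
  PQ_code g1 = PQ_code g2 -> PQ Q (lrel g1) = PQ Q (lrel g2).
Proof.
move=> g1_small g2_small eq_code; apply/polyP=> j; rewrite !coef_PQ; congr (_%:R)%R.
have [jm|mj] := ltnP j m; last first.
  by rewrite (Q_sets_large g1_small mj) (Q_sets_large g2_small mj).
have card_lt g : #|Q_sets Q (lrel g) j| < (2 ^ n).+1.
  by rewrite ltnS -[n in 2 ^ n]card_ord card_Q_sets.
have /(congr1 val) := congr1 (fun c : {ffun _ -> _} => c (Ordinal jm)) eq_code.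
by rewrite !ffunE /= !inordK.
Qed.

Lemma card_iso_classes_meeting_large :
  #|[set C in iso_classes n | [exists g in C, g \in large_Q_graphs]]|
    <= #|large_Q_graphs|.
Proof.
apply: leq_trans (leq_imset_card (@iso_class n) large_Q_graphs).
apply/subset_leq_card/subsetP=> C /setIdP[CI /exists_inP[g gC g_large]].
by apply/imsetP; exists g; last exact: iso_classesP.
Qed.

Lemma card_unique_classes_small :
  #|[set C in unique_classes Q n | ~~ [exists g in C, g \in large_Q_graphs]]|
    <= (2 ^ n).+1 ^ m.
Proof.
set good :=
  [set g in graphs n | (g \notin large_Q_graphs) && `[< PQ_unique Q (lrel g) >]].
apply: (@leq_trans #|(@iso_class n) @: good|).
  apply/subset_leq_card/subsetP.
  move=> C /setIdP[/setIdP[CI /asboolP[g gC g_unique]] C_small].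
  have gG : g \in graphs n.
    by have := gC; rewrite {1}(iso_classesP CI gC) => /setIdP[].
  apply/imsetP; exists g; last exact: iso_classesP.
  rewrite inE gG (contra _ C_small) => [|g_large]; first exact/asboolP.
  by apply/exists_inP; exists g.
apply: leq_trans (leq_card_imset_factor (f := PQ_code) _) _.
  move=> g1 g2 /setIdP[g1G /andP[g1_small _]].
  move=> /setIdP[g2G /andP[g2_small /asboolP g2_unique]] eq_code.
  apply/iso_class_eq/liso_graph_iso/g2_unique; first exact: lrel_graph.
  by apply: PQ_code_eq => //; [move: g1_small | move: g2_small]; rewrite inE ?g1G ?g2G.
by rewrite (leq_trans (max_card _)) // card_ffun !card_ord.
Qed.

Lemma card_unique_classes_le :
  #|unique_classes Q n| <= #|large_Q_graphs| + (2 ^ n).+1 ^ m.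
Proof.
set meets_large := [set C : {set lgraph n} | [exists g in C, g \in large_Q_graphs]].
rewrite -(cardsID meets_large) leq_add //.
  apply: leq_trans card_iso_classes_meeting_large; apply/subset_leq_card/subsetP.
  by move=> C; rewrite !inE => /andP[/andP[CI _] ->]; rewrite CI.
apply: leq_trans card_unique_classes_small; apply/subset_leq_card/subsetP.
by move=> C; rewrite !inE andbC.
Qed.

End CountingUniqueClasses.

Lemma sqr_le_exp2 q : 6 <= q -> q.+1 * q.+1 <= 2 ^ q.
Proof.
elim: q => // q IH; rewrite leq_eqVlt => /orP[/eqP <- // | q6].
have := IH q6; rewrite expnS; nia.
Qed.

Lemma leq_exp2_div c n : 6 <= c -> c * c <= n -> n <= 2 ^ (n %/ c).
Proof.
move=> c6 ccn; have c0 : 0 < c by apply: leq_trans c6.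
have cq : c <= n %/ c by rewrite leq_divRL.
apply: leq_trans (sqr_le_exp2 (leq_trans c6 cq)).
have := ltn_ceil n c0; nia.
Qed.

Lemma fact_le_expn n : n`! <= n ^ n.
Proof.
rewrite -ffactnn ffact_prod (@leq_trans (\prod_(i < n) n)) //.
  by apply: leq_prod => i _; rewrite leq_subr.
by rewrite prod_nat_const card_ord.
Qed.

Lemma mul_fact_le_exp2 c n : 6 <= c -> c * c <= n -> n * n`! <= 2 ^ (n %/ c * n.+1).
Proof.
move=> c6 ccn; rewrite expnM.
apply: leq_trans (_ : n ^ n.+1 <= _); first by rewrite expnS leq_mul2l fact_le_expn orbT.
by rewrite leq_exp2r // leq_exp2_div.
Qed.

Lemma bin2_double n : 'C(n, 2) * 2 = n * n.-1.
Proof. by rewrite -[2 in LHS]/(2`!) bin_ffact ffactnS ffactn1. Qed.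

Lemma large_Q_exponent_bound K n r s :
  0 < K -> 128 * K * K * r <= n -> n < 4 * K * s.+1 -> 16 * K + 8 <= s ->
  r * n.+1 + n <= 'C(s, 2).
Proof.
move=> K0 hr hn hs; have := bin2_double s.
have hKr : 32 * K * r <= s by nia.
nia.
Qed.

Lemma code_exponent_bound n r m : 128 * r <= n -> 4 * m <= n -> 5 <= n ->
  r * n.+1 + n.+1 * m <= 'C(n, 2).
Proof. move=> hr hm hn; have := bin2_double n; nia. Qed.

Lemma succ_exp2_le n m : (2 ^ n).+1 ^ m <= 2 ^ (n.+1 * m).
Proof.
rewrite expnM; case: m => // m.
by rewrite leq_exp2r // expnS mul2n -addnn -addn1 leq_add2l expn_gt0.
Qed.

Lemma large_Q_term_bound K n : 0 < K -> (128 * K * K) ^ 2 <= n ->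
  n * n`! * 2 ^ n <= 2 ^ 'C(n %/ (4 * K), 2).
Proof.
move=> K0 n_large; set c := 128 * K * K; set s := n %/ (4 * K).
have c6 : 6 <= c by rewrite /c; nia.
apply: leq_trans (_ : 2 ^ (n %/ c * n.+1 + n) <= _).
  by rewrite expnD leq_mul2r mul_fact_le_exp2 ?orbT.
rewrite leq_exp2l // (large_Q_exponent_bound K0) //.
- by rewrite mulnC leq_trunc_div.
- by rewrite mulnC ltn_ceil ?muln_gt0.
- by rewrite leq_divRL ?muln_gt0 //; move: n_large; rewrite /c; nia.
Qed.

Lemma code_term_bound K n : 0 < K -> (128 * K * K) ^ 2 <= n ->
  n * n`! * (2 ^ n).+1 ^ (n %/ (4 * K) * K) <= 2 ^ 'C(n, 2).
Proof.
move=> K0 n_large; set c := 128 * K * K; set m := n %/ (4 * K) * K.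
have c6 : 6 <= c by rewrite /c; nia.
apply: leq_trans (_ : 2 ^ (n %/ c * n.+1 + n.+1 * m) <= _).
  by rewrite expnD leq_mul ?succ_exp2_le ?mul_fact_le_exp2.
rewrite leq_exp2l // code_exponent_bound //.
- apply: leq_trans (leq_trunc_div n c); rewrite mulnC leq_mul2l /c; nia.
- by rewrite /m mulnCA leq_trunc_div.
- by move: n_large; rewrite /c; nia.
Qed.

Section DegenerateClass.
Variables (k : nat) (Q : graph_class).
Arguments Q : clear implicits.
Hypothesis Q_degenerate :
  forall (T : finType) (e : rel T), is_graph e -> Q T e -> degenerate k e.

Lemma large_Q_graph_indep n m s g : s * k.+1 <= m -> g \in large_Q_graphs Q n m ->
  exists2 B : {set 'I_n}, s <= #|B| & g \in indep_graphs B.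
Proof.
move=> sm /setIdP[gG /existsP[A /andP[mA QA]]].
have A_graph := induced_graph A (lrel_graph gG).
have [I [_ I_indep I_card]] :=
  degenerate_independent_set A_graph (Q_degenerate A_graph QA) [set: {x | x \in A}].
exists [set val x | x in I].
  rewrite card_imset; last exact: val_inj.
  rewrite -(leq_pmul2r (ltn0Sn k)) (leq_trans sm) // (leq_trans mA) //.
  rewrite (leq_trans _ I_card) //.
  by rewrite cardsT card_sig; apply/eq_leq/eq_card => x; rewrite inE.
rewrite inE gG; apply/forall_inP=> _ /imsetP[x xI ->].
by apply/forall_inP=> _ /imsetP[y yI ->]; apply: I_indep.
Qed.

Lemma card_large_Q_graphs n m s : s * k.+1 <= m ->
  #|large_Q_graphs Q n m| * 2 ^ 'C(s, 2) <= 2 ^ n * #|graphs n|.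
Proof.
move=> sm; set x := 2 ^ 'C(s, 2).
have cover :
    large_Q_graphs Q n m \subset \bigcup_(B : {set 'I_n} | s <= #|B|) indep_graphs B.
  by apply/subsetP=> g /(large_Q_graph_indep sm)[B sB gB]; apply/bigcupP; exists B.
have card_indep (B : {set 'I_n}) : s <= #|B| -> #|indep_graphs B| * x <= #|graphs n|.
  move=> sB; apply: leq_trans (card_indep_graphs B).
  by rewrite leq_mul2l leq_pexp2l ?leq_bin2l ?orbT.
apply: leq_trans (leq_mul (subset_leq_card cover) (leqnn x)) _.
apply: leq_trans (leq_mul (leq_card_bigcup _ _) (leqnn x)) _.
rewrite big_distrl /= -[n in 2 ^ n]card_ord -card_sets -sum_nat_const.
apply: (@leq_trans (\sum_(B : {set 'I_n} | s <= #|B|) #|graphs n|)).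
  exact: leq_sum.
by rewrite big_mkcond leq_sum // => B _; case: ifP.
Qed.

Lemma unique_classes_ratio n : (128 * k.+1 * k.+1) ^ 2 <= n ->
  #|unique_classes Q n| * n <= 2 * #|iso_classes n|.
Proof.
move=> n_large; set s := n %/ (4 * k.+1); set m := s * k.+1.
have U_le := card_unique_classes_le Q n m.
have B_le := card_large_Q_graphs n (leqnn m).
have G_le := card_graphs_le n.
have G_ge := card_graphs_ge n.
have large_Q_term := large_Q_term_bound (ltn0Sn k) n_large.
have code_term := code_term_bound (ltn0Sn k) n_large.
rewrite -/s -/m in large_Q_term code_term.
set U := #|unique_classes Q n| in U_le *; set I := #|iso_classes n| in G_le *.
set G := #|graphs n| in B_le G_le G_ge *; set B := #|large_Q_graphs Q n m| in U_le B_le.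
set x := 2 ^ 'C(s, 2) in B_le large_Q_term; set P := (2 ^ n).+1 ^ m in U_le code_term.
have x_fact_gt0 : 0 < n`! * x by rewrite muln_gt0 fact_gt0 expn_gt0.
rewrite -(leq_pmul2r x_fact_gt0).
have U_B_P : U * n * (n`! * x) <= (B + P) * n * (n`! * x).
  by rewrite !leq_mul2r U_le !orbT.
have B_term : B * x * (n * n`!) <= 2 ^ n * G * (n * n`!) by rewrite leq_mul2r B_le orbT.
have P_term : n * n`! * P * x <= G * x.
  by rewrite leq_mul2r (leq_trans code_term G_ge) orbT.
have G_term : G * (n * n`! * 2 ^ n) <= G * x by rewrite leq_mul2l large_Q_term orbT.
have G_I : G * x <= n`! * I * x by rewrite leq_mul2r G_le orbT.
lia.
Qed.

End DegenerateClass.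

Theorem corollary1 (k : nat) (Q : graph_class) :
  iso_closed Q ->
  (forall (T : finType) (e : rel T), is_graph e -> Q T e -> degenerate k e) ->
  weakly_distinguishing Q.
Proof.
move=> _ Q_degenerate eps eps_gt0.
have inv_eps_ge0 : (0 <= 2 / eps)%R by rewrite divr_ge0 // ltW.
exists ((128 * k.+1 * k.+1) ^ 2 + Num.Def.archi_bound (2 / eps)) => n n_large.
have ratio := unique_classes_ratio Q_degenerate (leq_trans (leq_addr _ _) n_large).
have n_gt_inv_eps : (2 / eps < n%:R)%R.
  apply: lt_le_trans (archi_boundP inv_eps_ge0) _.
  by rewrite ler_nat (leq_trans _ n_large) ?leq_addl.
have I_gt0 : (0 < #|iso_classes n|%:R :> rat)%R.
  rewrite ltr0n lt0n; apply: contraTneq (leq_trans (card_graphs_ge n) (card_graphs_le n)).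
  by move=> ->; rewrite muln0 leqn0 expn_eq0.
have n_gt0 : (0 < n%:R :> rat)%R by apply: le_lt_trans n_gt_inv_eps.
rewrite ltr_pdivrMr // -(ltr_pM2r n_gt0); rewrite ltr_pdivrMr // in n_gt_inv_eps.
move: ratio; rewrite -(ler_nat rat) !natrM => ratio.
nra.
Qed.
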